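(* Let $N\ge1$, let real channel gains $a_{s,r},a_{s,j},a_{r,j}$ ($j=1,\dots,N$) be fixed, and for powers $\mathbf{P}=(P_s,P_r)\in[0,\infty)^2$ set $\mathsf{SNR}_{s,r}=a_{s,r}^2P_s$, $\mathsf{SNR}_{s,j}=a_{s,j}^2P_s$, $\mathsf{SNR}_{r,j}=a_{r,j}^2P_r$, and $\mathbf{S}(\mathbf{P})=(\mathsf{SNR}_{s,r},\mathsf{SNR}_{s,1},\dots,\mathsf{SNR}_{s,N},\mathsf{SNR}_{r,1},\dots,\mathsf{SNR}_{r,N})$. With $\mathsf{C}(x)=\tfrac12\log(1+x)$, $f_j(\rho,\mathbf{S})=\mathsf{SNR}_{s,j}+\mathsf{SNR}_{r,j}+2\rho\sqrt{\mathsf{SNR}_{s,j}\mathsf{SNR}_{r,j}}$, $g_j(\rho,\mathbf{S})=(1-\rho^2)(\mathsf{SNR}_{s,j}+\mathsf{SNR}_{s,r})$ and $R_{CS}(\rho,\mathbf{S})=\min_{1\le j\le N}\min(\mathsf{C}(f_j(\rho,\mathbf{S})),\mathsf{C}(g_j(\rho,\mathbf{S})))$, the map $(t,\mathbf{P})\mapsto R_{CS}(\sqrt t,\mathbf{S}(\mathbf{P}))$ is quasi-concave on $[0,1]\times[0,\infty)^2$ (i.e., $R_{CS}(\rho,\mathbf{S}(\mathbf{P}))$ is quasi-concave in $(\rho^2,\mathbf{P})$).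
   Context: Setting: real AWGN multicast relay channel with source $s$, relay $r$ and destinations $1,\dots,N$; $\rho\in[0,1]$ is the source–relay input correlation coefficient. A function $F$ on a convex set is quasi-concave if $F(\lambda x_1+(1-\lambda)x_2)\ge\min(F(x_1),F(x_2))$ for all $x_1,x_2$ and $\lambda\in[0,1]$. *)

From Stdlib Require Import Reals.
Open Scope R_scope.

Definition Cap (x : R) : R := / 2 * ln (1 + x).

(* min_{1 <= j <= n} h j, meaningful for n >= 1 *)
Fixpoint min_1_to (h : nat -> R) (n : nat) : R :=
  match n with
  | O => h 1%nat
  | S m => Rmin (min_1_to h m) (h (S m))
  end.

(* An SNR vector S = (SNR_{s,r}, SNR_{s,1..N}, SNR_{r,1..N});
   the destination-indexed components are functions nat -> R used on 1..N. *)
Record snr_vec := mkSNR { snr_sr : R; snr_s : nat -> R; snr_r : nat -> R }.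

Definition f_j (j : nat) (rho : R) (S : snr_vec) : R :=
  snr_s S j + snr_r S j + 2 * rho * sqrt (snr_s S j * snr_r S j).

Definition g_j (j : nat) (rho : R) (S : snr_vec) : R :=
  (1 - rho ^ 2) * (snr_s S j + snr_sr S).

Definition R_CS (N : nat) (rho : R) (S : snr_vec) : R :=
  min_1_to (fun j => Rmin (Cap (f_j j rho S)) (Cap (g_j j rho S))) N.

Definition S_of_P (a_sr : R) (a_s a_r : nat -> R) (Ps Pr : R) : snr_vec :=
  mkSNR (a_sr ^ 2 * Ps) (fun j => a_s j ^ 2 * Ps) (fun j => a_r j ^ 2 * Pr).

Definition dom3 (t Ps Pr : R) : Prop := 0 <= t <= 1 /\ 0 <= Ps /\ 0 <= Pr.

Definition quasi_concave3 (D : R -> R -> R -> Prop) (F : R -> R -> R -> R) : Prop :=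
  forall t1 p1 q1 t2 p2 q2 lam : R,
    D t1 p1 q1 -> D t2 p2 q2 -> 0 <= lam <= 1 ->
    F (lam * t1 + (1 - lam) * t2) (lam * p1 + (1 - lam) * p2)
      (lam * q1 + (1 - lam) * q2)
    >= Rmin (F t1 p1 q1) (F t2 p2 q2).

(** Each rate [C(f_j)] and [C(g_j)] is quasi-concave in [(t, P_s, P_r)], and a minimum of
    quasi-concave functions is quasi-concave. Since [C] is increasing, it suffices to show that
    the arguments [P + Q + 2 sqrt(t P Q)] (with [P, Q] proportional to [P_s, P_r]) and
    [(1 - t) (a_{s,j}^2 + a_{s,r}^2) P_s] have convex superlevel sets. For the second, this is
    the AM-GM inequality for a product of two nonnegative affine functions. For the first, with
    [z = m - P - Q > 0], the level condition reads [(P + Q + z) z^2 / (P Q) <= 4 m t]; the left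
    side is a convex function of [(P, Q)] on the line [z = m - P - Q], so the condition is
    convex, which we show through its supporting planes. *)
From Stdlib Require Import Reals Lra Psatz.
Open Scope R_scope.

Definition mix (l x y : R) : R := l * x + (1 - l) * y.

Lemma mix_scale l c x y : c * mix l x y = mix l (c * x) (c * y).
Proof. unfold mix; ring. Qed.

Lemma mix0 x y : mix 0 x y = y.
Proof. unfold mix; ring. Qed.

Lemma mix1 x y : mix 1 x y = x.
Proof. unfold mix; ring. Qed.

Lemma mix_ge0 l x y : 0 <= l <= 1 -> 0 <= x -> 0 <= y -> 0 <= mix l x y.
Proof. unfold mix; nra. Qed.

Lemma le_2sqrt_iff z x : 0 <= z -> 0 <= x -> z <= 2 * sqrt x <-> z ^ 2 <= 4 * x.
Proof.
  intros Hz Hx.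
  pose proof (sqrt_pos x). pose proof (sqrt_sqrt x Hx).
  split; intros; nra.
Qed.

Definition fsum (t P Q : R) : R := P + Q + 2 * sqrt (t * (P * Q)).

Lemma fsum_ge0 t P Q : 0 <= P -> 0 <= Q -> 0 <= fsum t P Q.
Proof. intros. unfold fsum. pose proof (sqrt_pos (t * (P * Q))). lra. Qed.

Lemma amgm_cubic X Y W : 0 <= X -> 0 <= Y -> 0 <= W ->
  3 * X * Y * W <= X ^ 3 + Y * W * (Y + W).
Proof.
  intros HX HY HW.
  assert (0 <= (Y + W + X) * (Y + W - 2 * X) ^ 2)
    by (apply Rmult_le_pos; [lra | apply pow2_ge_0]).
  pose proof (pow2_ge_0 (Y - W)).
  destruct (Rle_lt_dec (3 * X) (Y + W)).
  - assert (0 <= Y * W * (Y + W - 3 * X)) by (apply Rmult_le_pos; nra). nra.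
  - assert (0 <= ((Y + W) ^ 2 / 4 - Y * W) * (3 * X - (Y + W)))
      by (apply Rmult_le_pos; nra).
    nra.
Qed.

(* The plane through the origin tangent, along the ray [z = a P = b Q], to the convex
   1-homogeneous function [(P + Q + z) z^2 / (P Q)]. *)
Definition tangent_form (a b z P Q : R) : R :=
  z * (2 * a + 2 * b + 3 * a * b)
  - a ^ 2 * P - b ^ 2 * Q - a ^ 2 * b * P - a * b ^ 2 * Q.

Lemma tangent_form_le a b z P Q : 0 <= a -> 0 <= b -> 0 <= z -> 0 < P -> 0 < Q ->
  P * Q * tangent_form a b z P Q <= (P + Q + z) * z ^ 2.
Proof.
  intros Ha Hb Hz HP HQ. unfold tangent_form.
  pose proof (amgm_cubic z (a * P) (b * Q) Hz ltac:(nra) ltac:(nra)).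
  assert (0 <= Q * (z - a * P) ^ 2) by (apply Rmult_le_pos; [lra | apply pow2_ge_0]).
  assert (0 <= P * (z - b * Q) ^ 2) by (apply Rmult_le_pos; [lra | apply pow2_ge_0]).
  nra.
Qed.

Lemma tangent_form_at z P Q : 0 < P -> 0 < Q ->
  P * Q * tangent_form (z / P) (z / Q) z P Q = (P + Q + z) * z ^ 2.
Proof. intros. unfold tangent_form. field. lra. Qed.

Lemma tangent_form_mix a b m l P1 Q1 P2 Q2 :
  tangent_form a b (m - mix l P1 P2 - mix l Q1 Q2) (mix l P1 P2) (mix l Q1 Q2)
  = mix l (tangent_form a b (m - P1 - Q1) P1 Q1) (tangent_form a b (m - P2 - Q2) P2 Q2).
Proof. unfold tangent_form, mix; ring. Qed.

Lemma tangent_form_le_of_le_fsum a b m t P Q :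
  0 <= a -> 0 <= b -> 0 <= m -> 0 <= t -> 0 <= P -> 0 <= Q ->
  m <= fsum t P Q -> tangent_form a b (m - P - Q) P Q <= 4 * m * t.
Proof.
  unfold fsum. intros Ha Hb Hm Ht HP HQ Hle.
  destruct (Rle_lt_dec (m - P - Q) 0) as [Hz | Hz].
  - unfold tangent_form.
    assert (0 <= (a ^ 2 + a ^ 2 * b) * P)
      by (apply Rmult_le_pos; [pose proof (pow2_ge_0 a); nra | lra]).
    assert (0 <= (b ^ 2 + a * b ^ 2) * Q)
      by (apply Rmult_le_pos; [pose proof (pow2_ge_0 b); nra | lra]).
    assert (0 <= 2 * a + 2 * b + 3 * a * b) by nra.
    assert ((m - P - Q) * (2 * a + 2 * b + 3 * a * b) <= 0) by nra.
    assert (0 <= m * t) by nra.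
    nra.
  - set (z := m - P - Q) in *.
    assert (0 <= t * (P * Q)) by (apply Rmult_le_pos; [| apply Rmult_le_pos]; assumption).
    assert (Hsq : z ^ 2 <= 4 * (t * (P * Q)))
      by (apply le_2sqrt_iff; [lra | assumption | unfold z; lra]).
    assert (HP' : 0 < P) by (destruct HP as [| <-]; [assumption | nra]).
    assert (HQ' : 0 < Q) by (destruct HQ as [| <-]; [assumption | nra]).
    pose proof (tangent_form_le a b z P Q Ha Hb ltac:(lra) HP' HQ').
    replace (P + Q + z) with m in * by (unfold z; ring).
    apply (Rmult_le_reg_l (P * Q)); nra.
Qed.

Lemma fsum_superlevel_convex_interior m l t1 P1 Q1 t2 P2 Q2 : 0 < l < 1 ->
  0 <= t1 -> 0 <= P1 -> 0 <= Q1 -> 0 <= t2 -> 0 <= P2 -> 0 <= Q2 ->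
  m <= fsum t1 P1 Q1 -> m <= fsum t2 P2 Q2 ->
  m <= fsum (mix l t1 t2) (mix l P1 P2) (mix l Q1 Q2).
Proof.
  intros Hl Ht1 HP1 HQ1 Ht2 HP2 HQ2 H1 H2.
  set (T := mix l t1 t2) in *; set (P := mix l P1 P2) in *; set (Q := mix l Q1 Q2) in *.
  assert (HT : 0 <= T) by (apply mix_ge0; lra).
  assert (HP : 0 <= P) by (apply mix_ge0; lra).
  assert (HQ : 0 <= Q) by (apply mix_ge0; lra).
  unfold fsum.
  pose proof (sqrt_pos (T * (P * Q))).
  destruct (Rle_lt_dec m (P + Q)) as [Hc | Hc]; [lra |].
  (* If [P = 0] then [P1 = P2 = 0], so [m <= Q1] and [m <= Q2]; symmetrically for [Q]. *)
  assert (HP' : 0 < P).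
  { destruct HP as [| HP]; [assumption |]. exfalso.
    assert (P1 = 0 /\ P2 = 0) as [-> ->] by (unfold P, mix in HP; nra).
    unfold fsum in H1, H2. rewrite !Rmult_0_l, !Rmult_0_r, sqrt_0 in H1, H2.
    unfold Q, mix in Hc. nra. }
  assert (HQ' : 0 < Q).
  { destruct HQ as [| HQ]; [assumption |]. exfalso.
    assert (Q1 = 0 /\ Q2 = 0) as [-> ->] by (unfold Q, mix in HQ; nra).
    unfold fsum in H1, H2. rewrite !Rmult_0_r, sqrt_0 in H1, H2.
    unfold P, mix in Hc. nra. }
  set (z := m - P - Q).
  assert (Hz : 0 < z) by (unfold z; lra).
  set (a := z / P); set (b := z / Q).
  assert (Ha : 0 <= a) by (apply Rlt_le, Rdiv_lt_0_compat; lra).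
  assert (Hb : 0 <= b) by (apply Rlt_le, Rdiv_lt_0_compat; lra).
  assert (Hab : tangent_form a b z P Q <= 4 * m * T).
  { unfold z, P, Q. rewrite tangent_form_mix. unfold T, mix.
    pose proof (tangent_form_le_of_le_fsum a b m t1 P1 Q1 Ha Hb).
    pose proof (tangent_form_le_of_le_fsum a b m t2 P2 Q2 Ha Hb).
    nra. }
  assert (Hsq : z ^ 2 <= 4 * (T * (P * Q))).
  { apply (Rmult_le_compat_l (P * Q)) in Hab; [| nra].
    unfold a, b in Hab. rewrite tangent_form_at in Hab by lra.
    replace (P + Q + z) with m in Hab by (unfold z; ring).
    nra. }
  apply le_2sqrt_iff in Hsq; [unfold z in Hsq; lra | lra | nra].
Qed.

Lemma fsum_superlevel_convex m l t1 P1 Q1 t2 P2 Q2 : 0 <= l <= 1 ->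
  0 <= t1 -> 0 <= P1 -> 0 <= Q1 -> 0 <= t2 -> 0 <= P2 -> 0 <= Q2 ->
  m <= fsum t1 P1 Q1 -> m <= fsum t2 P2 Q2 ->
  m <= fsum (mix l t1 t2) (mix l P1 P2) (mix l Q1 Q2).
Proof.
  intros Hl Ht1 HP1 HQ1 Ht2 HP2 HQ2 H1 H2.
  destruct (Req_dec l 0) as [-> | Hl0]; [now rewrite !mix0 |].
  destruct (Req_dec l 1) as [-> | Hl1]; [now rewrite !mix1 |].
  apply fsum_superlevel_convex_interior; auto; lra.
Qed.

Lemma fsum_quasi_concave l t1 P1 Q1 t2 P2 Q2 : 0 <= l <= 1 ->
  0 <= t1 -> 0 <= P1 -> 0 <= Q1 -> 0 <= t2 -> 0 <= P2 -> 0 <= Q2 ->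
  Rmin (fsum t1 P1 Q1) (fsum t2 P2 Q2) <= fsum (mix l t1 t2) (mix l P1 P2) (mix l Q1 Q2).
Proof.
  intros. apply fsum_superlevel_convex; auto using Rmin_l, Rmin_r.
Qed.

Lemma Rmin_mul_le_mix l u1 x1 u2 x2 : 0 <= l <= 1 ->
  0 <= u1 -> 0 <= x1 -> 0 <= u2 -> 0 <= x2 ->
  Rmin (u1 * x1) (u2 * x2) <= mix l u1 u2 * mix l x1 x2.
Proof.
  intros Hl Hu1 Hx1 Hu2 Hx2.
  set (m := Rmin (u1 * x1) (u2 * x2)).
  assert (m <= u1 * x1) by apply Rmin_l.
  assert (m <= u2 * x2) by apply Rmin_r.
  assert (0 <= m) by (unfold m, Rmin; destruct Rle_dec; nra).
  (* AM-GM: [(2 m)^2 <= 4 (u1 x1) (u2 x2) = 4 (u1 x2) (u2 x1) <= (u1 x2 + u2 x1)^2]. *)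
  assert (Hcross : 2 * m <= u1 * x2 + u2 * x1).
  { assert (m * m <= (u1 * x2) * (u2 * x1))
      by (replace ((u1 * x2) * (u2 * x1)) with ((u1 * x1) * (u2 * x2)) by ring;
          apply Rmult_le_compat; lra).
    pose proof (pow2_ge_0 (u1 * x2 - u2 * x1)).
    assert (0 <= u1 * x2) by nra. assert (0 <= u2 * x1) by nra.
    nra. }
  replace (mix l u1 u2 * mix l x1 x2) with
    (l * l * (u1 * x1) + (1 - l) * (1 - l) * (u2 * x2) + l * (1 - l) * (u1 * x2 + u2 * x1))
    by (unfold mix; ring).
  assert (0 <= l * (1 - l)) by nra.
  assert (l * l * m <= l * l * (u1 * x1)) by (apply Rmult_le_compat_l; nra).
  assert ((1 - l) * (1 - l) * m <= (1 - l) * (1 - l) * (u2 * x2))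
    by (apply Rmult_le_compat_l; nra).
  assert (l * (1 - l) * (2 * m) <= l * (1 - l) * (u1 * x2 + u2 * x1))
    by (apply Rmult_le_compat_l; lra).
  nra.
Qed.

Lemma Cap_le x y : 0 <= x -> x <= y -> Cap x <= Cap y.
Proof.
  intros. unfold Cap. apply Rmult_le_compat_l; [lra |].
  destruct (Req_dec x y) as [-> | ]; [lra |]. left. apply ln_increasing; lra.
Qed.

Lemma Cap_Rmin_le u1 u2 u : 0 <= u1 -> 0 <= u2 -> Rmin u1 u2 <= u ->
  Rmin (Cap u1) (Cap u2) <= Cap u.
Proof.
  intros H1 H2 Hu. destruct (Rle_dec u1 u2).
  - rewrite Rmin_left in Hu by lra.
    eapply Rle_trans; [apply Rmin_l | apply Cap_le; lra].
  - rewrite Rmin_right in Hu by lra.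
    eapply Rle_trans; [apply Rmin_r | apply Cap_le; lra].
Qed.

Lemma Rmin_Rmin_le a1 b1 a2 b2 a b : Rmin a1 a2 <= a -> Rmin b1 b2 <= b ->
  Rmin (Rmin a1 b1) (Rmin a2 b2) <= Rmin a b.
Proof. unfold Rmin. repeat destruct Rle_dec; lra. Qed.

Lemma min_1_to_Rmin_le (h1 h2 h : nat -> R) :
  (forall j, Rmin (h1 j) (h2 j) <= h j) ->
  forall n, Rmin (min_1_to h1 n) (min_1_to h2 n) <= min_1_to h n.
Proof.
  intros H n. induction n as [| n IH]; simpl; [apply H |].
  now apply Rmin_Rmin_le.
Qed.

Lemma f_j_sqrt j t S : 0 <= t ->
  f_j j (sqrt t) S = fsum t (snr_s S j) (snr_r S j).
Proof.
  intros Ht. unfold f_j, fsum.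
  rewrite (sqrt_mult_alt t) by exact Ht; ring.
Qed.

Lemma g_j_sqrt j t S : 0 <= t ->
  g_j j (sqrt t) S = (1 - t) * (snr_s S j + snr_sr S).
Proof.
  intros. unfold g_j. simpl. now rewrite Rmult_1_r, sqrt_sqrt.
Qed.

Theorem corollary1 (N : nat) (HN : (1 <= N)%nat) (a_sr : R) (a_s a_r : nat -> R) :
  quasi_concave3 dom3
    (fun t Ps Pr => R_CS N (sqrt t) (S_of_P a_sr a_s a_r Ps Pr)).
Proof.
  intros t1 p1 q1 t2 p2 q2 l [Ht1 [Hp1 Hq1]] [Ht2 [Hp2 Hq2]] Hl.
  change (l * t1 + (1 - l) * t2) with (mix l t1 t2).
  change (l * p1 + (1 - l) * p2) with (mix l p1 p2).
  change (l * q1 + (1 - l) * q2) with (mix l q1 q2).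
  apply Rle_ge, min_1_to_Rmin_le. intros j.
  assert (Ht : 0 <= mix l t1 t2) by (apply mix_ge0; lra).
  pose proof (pow2_ge_0 (a_s j)); pose proof (pow2_ge_0 (a_r j)); pose proof (pow2_ge_0 a_sr).
  apply Rmin_Rmin_le; apply Cap_Rmin_le.
  - rewrite f_j_sqrt by lra. apply fsum_ge0; simpl; nra.
  - rewrite f_j_sqrt by lra. apply fsum_ge0; simpl; nra.
  - rewrite !f_j_sqrt by lra. simpl. rewrite !mix_scale.
    apply fsum_quasi_concave; nra.
  - rewrite g_j_sqrt by lra. simpl. apply Rmult_le_pos; nra.
  - rewrite g_j_sqrt by lra. simpl. apply Rmult_le_pos; nra.
  - rewrite !g_j_sqrt by lra. simpl. rewrite <- !Rmult_plus_distr_r, mix_scale.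
    replace (1 - mix l t1 t2) with (mix l (1 - t1) (1 - t2)) by (unfold mix; ring).
    apply Rmin_mul_le_mix; nra.
Qed.
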